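(* Under Assumptions A1–A4, for every evaluation step $n\in\{E,2E,3E,\dots\}$ the lengths produced by the core Two-Tailed Averaging algorithm satisfy $S(n)<\mathcal{O}(n)$ and $L(n)<2\mathcal{O}(n)+E$.
   Context: Let $\Theta=\mathbb{R}^d$, let $(\theta_t)_{t\in\mathbb{N}_0}$ be a sequence in $\Theta$, let $f\colon\Theta\to\mathbb{R}$ be a loss function, and let $E\in\mathbb{N}$ be the evaluation period. Evaluation steps are the multiples of $E$. For integers $t\ge \Delta\ge 1$ write $\mathrm{avg}(t,\Delta)=\frac{1}{\Delta}\sum_{i=t+1-\Delta}^{t}\theta_i$; set $f(\mathrm{avg}(t,0))=+\infty$. Core Two-Tailed Averaging: it maintains integers $S,L$ and vectors $\theta^S,\theta^L$, initially $S=L=0$, $\theta^S=\theta^L=0$. For $t=1,2,\dots$: first $\theta_t$ is added to both averages, i.e. $\theta^S\leftarrow\theta^S+(\theta_t-\theta^S)/(S+1)$, $S\leftarrow S+1$, and $\theta^L\leftarrow\theta^L+(\theta_t-\theta^L)/(L+1)$, $L\leftarrow L+1$ (so $\theta^S=\mathrm{avg}(t,S)$, $\theta^L=\mathrm{avg}(t,L)$). Then, if $E$ divides $t$: if $f(\theta^S)\le f(\theta^L)$, a switch is performed: $L\leftarrow S$, $\theta^L\leftarrow\theta^S$, $S\leftarrow 0$. $S(t),L(t)$ denote the values after the $t$-th pass through the loop. Optimal length: for $t\ge1$, $\mathcal{O}(t)$ is a (fixed) minimizer of $\Delta\mapsto f(\mathrm{avg}(t,\Delta))$ over $\Delta\in\{1,\dots,t\}$;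 $\mathcal{O}_E(n)=\lfloor \mathcal{O}(n)/E\rfloor E$ and $\mathcal{O}^E(n)=\lceil \mathcal{O}(n)/E\rceil E$. Assumptions (for all evaluation steps $n\ge E$): A1: $\Delta\mapsto f(\mathrm{avg}(n,\Delta))$ is strictly decreasing on $\Delta\in\{0,E,2E,\dots,\mathcal{O}_E(n)\}$. A2: for every integer $n_+$ with $\mathcal{O}^E(n)\le n_+\le n$, $f(\mathrm{avg}(n,\mathcal{O}^E(n)))\le f(\mathrm{avg}(n,n_+))$. A3: there exists a positive multiple $n_s$ of $E$ with $\mathcal{O}(n+n_s)-\mathcal{O}(n)<n_s$. A4: $\mathcal{O}(n)\le\mathcal{O}(n+E)$. *)

From HB Require Import structures.
From mathcomp Require Import all_boot all_order all_algebra.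
From mathcomp Require Import reals constructive_ereal.
Set Implicit Arguments. Unset Strict Implicit. Unset Printing Implicit Defensive.
Import Order.TTheory GRing.Theory Num.Theory.
Local Open Scope ring_scope.

Section TTA.
Variables (R : realType) (d : nat).
Notation vec := 'rV[R]_d.
Variables (theta : nat -> vec) (f : vec -> R) (E : nat).

Definition avg (t D : nat) : vec :=
  (D%:R)^-1 *: \sum_((t.+1 - D)%N <= i < t.+1) theta i.

Definition favg (t D : nat) : \bar R :=
  if D == 0%N then +oo%E else (f (avg t D))%:E.

Definition tta_step (t : nat) (st : nat * nat * vec * vec) : nat * nat * vec * vec :=
  let: (s, l, thS, thL) := st in
  let thS' := thS + (s.+1%:R)^-1 *: (theta t - thS) in
  let S' := s.+1 in
  let thL' := thL + (l.+1%:R)^-1 *: (theta t - thL) in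
  let L' := l.+1 in
  if (E %| t)%N && (f thS' <= f thL') then (0%N, S', thS', thS')
  else (S', L', thS', thL').

Fixpoint tta_state (t : nat) : nat * nat * vec * vec :=
  match t with
  | 0 => (0%N, 0%N, 0, 0)
  | t'.+1 => tta_step t'.+1 (tta_state t')
  end.

Definition S_len (t : nat) : nat := (tta_state t).1.1.1.
Definition L_len (t : nat) : nat := (tta_state t).1.1.2.

Definition is_optimal_length (O : nat -> nat) : Prop :=
  forall t, (0 < t)%N ->
    [/\ (1 <= O t <= t)%N &
        forall D, (1 <= D <= t)%N -> f (avg t (O t)) <= f (avg t D)].

Definition O_lo (O : nat -> nat) (n : nat) : nat := (O n %/ E * E)%N.
Definition O_up (O : nat -> nat) (n : nat) : nat := ((O n + E - 1) %/ E * E)%N.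

Definition is_eval_step (n : nat) : Prop := (0 < n)%N /\ (E %| n)%N.

Definition A1 (O : nat -> nat) : Prop :=
  forall n, is_eval_step n ->
    forall k k' : nat, (k < k')%N -> (k' * E <= O_lo O n)%N ->
      (favg n (k' * E) < favg n (k * E))%E.

Definition A2 (O : nat -> nat) : Prop :=
  forall n, is_eval_step n ->
    forall np : nat, (O_up O n <= np <= n)%N ->
      (favg n (O_up O n) <= favg n np)%E.

Definition A3 (O : nat -> nat) : Prop :=
  forall n, is_eval_step n ->
    exists ns : nat, [/\ (0 < ns)%N, (E %| ns)%N &
                       (O (n + ns)%N < O n + ns)%N].

Definition A4 (O : nat -> nat) : Prop :=
  forall n, is_eval_step n -> (O n <= O (n + E)%N)%N.

End TTA.

(* Only A2, A4 and O(n) >= 1 are needed. At consecutive evaluation steps m and n = m + E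
   both lengths grow by E, unless a switch sets S to 0 and L to the old S + E.
   By induction, S(m) < O(m) <= O(n) (A4) and E divides S(m).  If S(m) + E
   were >= O(n), then S(m) + E = O^E(n), so A2 applied to L(m) + E would force
   a switch; hence without a switch S(n) < O(n).  The companion invariant
   L(n) < S(n) + O(n) + E then gives L(n) < 2 O(n) + E. *)
From HB Require Import structures.
From mathcomp Require Import all_boot all_order all_algebra.
From mathcomp Require Import reals constructive_ereal.
From mathcomp Require Import ring zify.
Import Order.TTheory GRing.Theory Num.Theory.
Local Open Scope ring_scope.

Lemma running_mean (R : numFieldType) (V : lmodType R) (s : nat) (w v : V) :
  (0 < s)%N ->
  s%:R^-1 *: w + s.+1%:R^-1 *: (v - s%:R^-1 *: w) = s.+1%:R^-1 *: (w + v).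
Proof.
move=> s_gt0; rewrite scalerDr scalerN scalerA [RHS]scalerDr addrCA [RHS]addrC.
congr (_ + _); rewrite -scaleNr -scalerDl; congr (_ *: _).
have s_neq0 : (s%:R : R) != 0 by rewrite pnatr_eq0 -lt0n.
have sS_neq0 : (s.+1%:R : R) != 0 by rewrite pnatr_eq0.
rewrite -natr1; rewrite -natr1 in sS_neq0; field.
by rewrite s_neq0 sS_neq0.
Qed.

Lemma ceil_mul_eq (E s o : nat) :
  (0 < E)%N -> (E %| s)%N -> (s < o <= s + E)%N -> ((o + E - 1) %/ E * E = s + E)%N.
Proof.
move=> E_gt0 /dvdnP[a ->] /andP[lt_so le_o]; rewrite -mulSnr; congr (_ * _)%N.
apply/eqP; rewrite eqn_leq -ltnS ltn_divLR // leq_divRL //; apply/andP; split; nia.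
Qed.

Section TwoTailedAveraging.
Variables (R : realType) (d : nat) (theta : nat -> 'rV[R]_d)
  (f : 'rV[R]_d -> R) (E : nat).

Local Notation avg := (avg theta).
Local Notation S := (S_len theta f E).
Local Notation L := (L_len theta f E).

Lemma avg_running_mean t s a : (s <= t)%N -> ((0 < s)%N -> a = avg t s) ->
  a + s.+1%:R^-1 *: (theta t.+1 - a) = avg t.+1 s.+1.
Proof.
case: s => [|s] le_st a_avg.
  by rewrite /avg invr1 !scale1r subSS subn0 big_nat1 addrC subrK.
rewrite a_avg // /avg [in RHS]subSS [in RHS]big_nat_recr /=; last by lia.
by apply: running_mean.
Qed.

Lemma tta_state_inv t : let st := tta_state theta f E t in
  [/\ (st.1.1.1 <= st.1.1.2 <= t)%N,
      (0 < st.1.1.1)%N -> st.1.2 = avg t st.1.1.1 &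
      st.2 = avg t st.1.1.2].
Proof.
elim: t => [|t]; first by split => //=; rewrite /avg big_geq // scaler0.
rewrite [tta_state _ _ _ t.+1]/=.
case: (tta_state theta f E t) => [[[s l] a] b] /= [/andP[le_sl le_lt] a_avg ->].
rewrite /tta_step (avg_running_mean _ _ _ (leq_trans le_sl le_lt) a_avg).
by rewrite avg_running_mean //; case: ifP => _ /=; split => //; lia.
Qed.

Lemma lens_le t : (S t <= L t <= t)%N.
Proof. by case: (tta_state_inv t). Qed.

Lemma lensS t : (S t.+1, L t.+1) =
  if (E %| t.+1)%N && (f (avg t.+1 (S t).+1) <= f (avg t.+1 (L t).+1))
  then (0%N, (S t).+1) else ((S t).+1, (L t).+1).
Proof.
rewrite /S_len /L_len [tta_state _ _ _ t.+1]/=.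
have := tta_state_inv t.
case: (tta_state theta f E t) => [[[s l] a] b] /= [/andP[le_sl le_lt] a_avg ->].
rewrite /tta_step (avg_running_mean _ _ _ (leq_trans le_sl le_lt) a_avg).
by rewrite avg_running_mean //; case: ifP.
Qed.

Hypothesis E_gt0 : (0 < E)%N.

Lemma lens_between_evals m j : (E %| m)%N -> (j < E)%N ->
  S (m + j) = (S m + j)%N /\ L (m + j) = (L m + j)%N.
Proof.
move=> Em; elim: j => [|j IH] lt_jE; first by rewrite !addn0.
have [S_mj L_mj] := IH (ltnW lt_jE).
have /negbTE no_eval : ~~ (E %| (m + j).+1)%N.
  by rewrite -addnS dvdn_addr // gtnNdvd.
have := lensS (m + j); rewrite no_eval /= addnS => -[-> ->].
by rewrite S_mj L_mj !addnS.
Qed.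

Lemma lens_next_eval m : (E %| m)%N ->
  (S (m + E), L (m + E)) =
  if f (avg (m + E) (S m + E)) <= f (avg (m + E) (L m + E))
  then (0%N, (S m + E)%N) else ((S m + E)%N, (L m + E)%N).
Proof.
move=> Em; have mE : (m + E = (m + E.-1).+1)%N by lia.
have [S_m L_m] := lens_between_evals m E.-1 Em (ltac:(lia)).
rewrite mE lensS S_m L_m -mE dvdn_addr // dvdnn /=.
by rewrite -!addnS prednK.
Qed.

Lemma lens_dvd k : (E %| S (k * E))%N /\ (E %| L (k * E))%N.
Proof.
elim: k => [|k [ES EL]]; first by rewrite mul0n dvdn0.
have := lens_next_eval _ (dvdn_mull k (dvdnn E)); rewrite -mulSnr.
by case: ifP => _ [-> ->]; rewrite ?dvdn0 !dvdn_add ?dvdnn.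
Qed.

Variable O : nat -> nat.
Hypotheses (O_opt : is_optimal_length theta f O) (hA2 : A2 theta f E O).

Lemma no_switch_short_len_lt_opt m : (E %| m)%N -> (E %| S m)%N ->
  (S m < O (m + E))%N ->
  f (avg (m + E) (L m + E)) < f (avg (m + E) (S m + E)) ->
  (S m + E < O (m + E))%N.
Proof.
move=> Em ES lt_SO no_switch; rewrite ltnNge; apply/negP => le_OS.
have [le_SL le_Lm] := andP (lens_le m).
have up : O_up E O (m + E) = (S m + E)%N by apply: ceil_mul_eq => //; lia.
have eval_n : is_eval_step E (m + E) by split; [lia | rewrite dvdn_add ?dvdnn].
have := hA2 _ eval_n (L m + E)%N; rewrite up /favg !ifF; try lia.
by rewrite lee_fin leNgt no_switch => /(_ ltac:(lia)).
Qed.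

Lemma lens_bounds_next m : (E %| m)%N -> (E %| S m)%N ->
  (S m < O (m + E))%N -> (L m < S m + O (m + E) + E)%N ->
  (S (m + E) < O (m + E))%N /\ (L (m + E) < S (m + E) + O (m + E) + E)%N.
Proof.
move=> Em ES lt_SO lt_LO.
have [O_pos _] := O_opt (m + E)%N ltac:(lia).
have := lens_next_eval _ Em.
case: ifP => [_ [-> ->] | /negbT no_switch [-> ->]]; first lia.
rewrite -ltNge in no_switch.
have := no_switch_short_len_lt_opt _ Em ES lt_SO no_switch; lia.
Qed.

Hypothesis hA4 : A4 E O.

Lemma lens_bounds k : (S (k.+1 * E) < O (k.+1 * E))%N /\
  (L (k.+1 * E) < S (k.+1 * E) + O (k.+1 * E) + E)%N.
Proof.
elim: k => [|k [lt_SO lt_LO]].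
  have [O_pos _] := O_opt E E_gt0.
  have := lens_bounds_next 0; rewrite add0n mul1n.
  by apply; rewrite ?dvdn0 /S_len /L_len //=; lia.
have eval_m : is_eval_step E (k.+1 * E) by split; [lia | exact: dvdn_mull].
have := hA4 _ eval_m; rewrite [(k.+2 * E)%N]mulSnr => le_OO.
apply: lens_bounds_next; [exact: dvdn_mull | by case: (lens_dvd k.+1) | lia | lia].
Qed.

End TwoTailedAveraging.

Theorem mainTheorem2 (R : realType) (d : nat) (theta : nat -> 'rV[R]_d)
  (f : 'rV[R]_d -> R) (E : nat) (O : nat -> nat) :
  (0 < E)%N ->
  is_optimal_length theta f O ->
  A1 theta f E O -> A2 theta f E O -> A3 E O -> A4 E O ->
  forall n : nat, is_eval_step E n ->
    (S_len theta f E n < O n)%N /\ (L_len theta f E n < 2 * O n + E)%N.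
Proof.
move=> E_gt0 O_opt _ hA2 _ hA4 n [n_gt0 /dvdnP[[|k] n_eq]]; subst n => //.
have [lt_SO lt_LO] := @lens_bounds R d theta f E E_gt0 O O_opt hA2 hA4 k.
by split; lia.
Qed.
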